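(* Let $q\ge4$ be an integer and $f(x)=\log\left|\frac{\sin\pi qx}{\sin\pi x}\right|$. For $t\in\left(\frac{3}{8q},\frac{5}{8q}\right)$ and $t\le s<1/q$, $$G(t,s):=U(s)+V(t,s)<0,$$ where $U(s)=\log\frac{\sin\pi(q^{-1}-s)}{\sin\pi(q^{-1}+s)}$ and $$V(t,s)=f(0)-f(t)+f\left(\frac1q-t-\frac{s-t}{q-1}\right)-f\left(\frac1q-t\right)-f'(t)\frac{s-t}{q-1}.$$
   Context: $f(0)=\log q$ (value of $f$ at $0$ by continuity). *)

From Stdlib Require Import Reals Lra.
From Coquelicot Require Import Coquelicot.
Open Scope R_scope.

(* f(x) = log |sin(pi q x) / sin(pi x)|, extended by continuity at the
   zeros of sin(pi x) (the integers), where the limit is log q. *)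
Definition fq (q : nat) (x : R) : R :=
  if Req_EM_T (sin (PI * x)) 0 then ln (INR q)
  else ln (Rabs (sin (PI * INR q * x) / sin (PI * x))).

Definition Uq (q : nat) (s : R) : R :=
  ln (sin (PI * (/ INR q - s)) / sin (PI * (/ INR q + s))).

Definition Vq (q : nat) (t s : R) : R :=
  fq q 0 - fq q t
  + fq q (/ INR q - t - (s - t) / (INR q - 1)) - fq q (/ INR q - t)
  - Derive (fq q) t * ((s - t) / (INR q - 1)).

Definition Gq (q : nat) (t s : R) : R := Uq q s + Vq q t s.

From Stdlib Require Import Reals Lra Lia.
From Coquelicot Require Import Coquelicot.
Open Scope R_scope.

(* G(t, t) reduces to log [q sin(pi t) sin(pi (1/q - t)) / (sin(pi q t) sin(pi (1/q + t)))],
   which is negative by Taylor bounds on sin since q t is close to 1/2.  As a function of s,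
   G(t, .) has derivative -pi/(q-1) times
     (q-1) (cot a_- + cot a_+) + q (cot(pi q z) + cot(pi q t)) - cot(pi z) - cot(pi t),
   where a_(+/-) = pi (1/q +/- s) and z = 1/q - t - (s-t)/(q-1); every term is controlled by
   monotonicity of cot and cot x ~ 1/x, so this combination is nonnegative.  Hence
   G(t, s) <= G(t, t) < 0. *)

Lemma cos_le_taylor4 x : -2 <= x <= 2 -> cos x <= 1 - x ^ 2 / 2 + x ^ 4 / 24.
Proof.
intros Hx; destruct (pre_cos_bound x 0 ltac:(lra) ltac:(lra)) as [_ H].
unfold cos_approx, cos_term in H; simpl in H; lra.
Qed.

Lemma cos_ge_taylor2 x : -2 <= x <= 2 -> 1 - x ^ 2 / 2 <= cos x.
Proof.
intros Hx; destruct (pre_cos_bound x 0 ltac:(lra) ltac:(lra)) as [H _].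
unfold cos_approx, cos_term in H; simpl in H; lra.
Qed.

Lemma sin_ge_taylor3 x : 0 <= x <= 4 -> x - x ^ 3 / 6 <= sin x.
Proof.
intros Hx; destruct (pre_sin_bound x 0 ltac:(lra) ltac:(lra)) as [H _].
unfold sin_approx, sin_term in H; simpl in H; lra.
Qed.

(* [cos (8/5) < 0] by the Taylor bound, so [PI / 2 < 8/5]. *)
Lemma PI_lt_16_5 : PI < 16 / 5.
Proof.
destruct (Rlt_or_le PI (16 / 5)) as [H | H]; [exact H |].
pose proof (cos_le_taylor4 (8 / 5) ltac:(lra)).
pose proof (cos_ge_0 (8 / 5) ltac:(lra) ltac:(lra)).
lra.
Qed.

Definition cot (x : R) : R := cos x / sin x.

Lemma cot_nonneg x : 0 < x <= PI / 2 -> 0 <= cot x.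
Proof.
intros Hx; unfold cot.
assert (0 < sin x) by (apply sin_gt_0; lra).
assert (0 <= cos x) by (apply cos_ge_0; lra).
apply Rdiv_le_0_compat; lra.
Qed.

Lemma cot_add_nonneg x y : 0 < x -> 0 < y -> x + y <= PI -> 0 <= cot x + cot y.
Proof.
intros Hx Hy Hxy; unfold cot.
assert (0 < sin x) by (apply sin_gt_0; lra).
assert (0 < sin y) by (apply sin_gt_0; lra).
assert (Hs : 0 <= sin (x + y)) by (apply sin_ge_0; lra).
rewrite sin_plus in Hs.
replace (cos x / sin x + cos y / sin y)
  with ((sin x * cos y + cos x * sin y) / (sin x * sin y)) by (field; lra).
apply Rdiv_le_0_compat; nra.
Qed.

Lemma cot_decreasing x y : 0 < x -> x <= y -> y < PI -> cot y <= cot x.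
Proof.
intros Hx Hxy Hy; unfold cot.
assert (0 < sin x) by (apply sin_gt_0; lra).
assert (0 < sin y) by (apply sin_gt_0; lra).
assert (Hs : 0 <= sin (y - x)) by (apply sin_ge_0; lra).
rewrite sin_minus in Hs.
assert (0 <= (sin y * cos x - cos y * sin x) / (sin x * sin y))
  by (apply Rdiv_le_0_compat; nra).
replace (cos x / sin x) with
  (cos y / sin y + (sin y * cos x - cos y * sin x) / (sin x * sin y)) by (field; lra).
lra.
Qed.

Lemma cot_le_inv x : 0 < x <= 2 -> cot x <= / x.
Proof.
intros Hx; unfold cot.
pose proof (cos_le_taylor4 x ltac:(lra)).
pose proof (sin_ge_taylor3 x ltac:(lra)).
assert (0 < sin x) by nra.
assert (x * cos x <= sin x).
{ assert (x * cos x <= x * (1 - x ^ 2 / 2 + x ^ 4 / 24)) by (apply Rmult_le_compat_l; lra).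
  assert (0 <= x ^ 3) by (apply pow_le; lra).
  nra. }
apply (Rmult_le_reg_r (x * sin x)); [nra |].
replace (cos x / sin x * (x * sin x)) with (x * cos x) by (field; lra).
replace (/ x * (x * sin x)) with (sin x) by (field; lra).
lra.
Qed.

Lemma cot_ge_inv x : 0 < x <= 1 -> (1 - x ^ 2 / 2) / x <= cot x.
Proof.
intros Hx; unfold cot.
pose proof (cos_ge_taylor2 x ltac:(lra)).
pose proof (sin_lt_x x ltac:(lra)).
assert (0 < sin x) by (apply sin_gt_0; pose proof PI2_1; lra).
apply (Rmult_le_reg_r (x * sin x)); [nra |].
replace (cos x / sin x * (x * sin x)) with (x * cos x) by (field; lra).
replace ((1 - x ^ 2 / 2) / x * (x * sin x)) with ((1 - x ^ 2 / 2) * sin x) by (field; lra).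
assert (0 <= 1 - x ^ 2 / 2) by nra.
assert ((1 - x ^ 2 / 2) * sin x <= (1 - x ^ 2 / 2) * x) by (apply Rmult_le_compat_l; lra).
nra.
Qed.

Lemma derive_nonpos_le (f df : R -> R) (a b : R) : a <= b ->
  (forall x, a <= x <= b -> is_derive f x (df x)) ->
  (forall x, a <= x <= b -> df x <= 0) -> f b <= f a.
Proof.
intros Hab Hf Hdf.
destruct (MVT_gen f a b df) as (c & Hc & E);
  rewrite ?Rmin_left, ?Rmax_right in * by lra.
- intros x Hx; apply Hf; lra.
- intros x Hx; apply continuity_pt_filterlim, (ex_derive_continuous f).
  exists (df x); apply Hf; lra.
- pose proof (Hdf c Hc); nra.
Qed.

Lemma cot_combination_ge (Q t s z : R) :
  4 <= Q -> 3 / 8 < Q * t < 5 / 8 -> t <= s < / Q -> / Q - s <= z <= / Q - t ->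
  cot (PI * z) + cot (PI * t)
  <= (Q - 1) * (cot (PI * (/ Q - s)) + cot (PI * (/ Q + s)))
     + Q * (cot (PI * Q * z) + cot (PI * Q * t)).
Proof.
intros HQ Ht Hs Hz.
pose proof PI_RGT_0; pose proof PI_lt_16_5.
assert (HQinv : Q * / Q = 1) by (field; lra).
assert (/ Q <= / 4) by (apply Rinv_le_contravar; lra).
assert (Ht0 : 0 < t) by nra.
set (A1 := cot (PI * (/ Q - s))); set (A2 := cot (PI * (/ Q + s))).
set (B1 := cot (PI * Q * z)); set (B2 := cot (PI * z)).
set (C1 := cot (PI * Q * t)); set (C2 := cot (PI * t)).
(* A2 >= 0, B1 + C1 >= 0 and B2 <= A1 are monotonicity facts; the remaining term C2 is
   absorbed by (Q - 2) A1 because C2 <= 1 / (PI t) < 8Q / (3 PI) whereas A1 >= 7Q / (5 PI). *)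
assert (HA2 : 0 <= A2) by (apply cot_nonneg; nra).
assert (HBC1 : 0 <= B1 + C1).
{ assert (0 < Q * z) by nra.
  assert (Q * z + Q * t <= 1) by nra.
  unfold B1, C1; rewrite !Rmult_assoc; apply cot_add_nonneg; nra. }
assert (HB2 : B2 <= A1) by (apply cot_decreasing; nra).
assert (HC2 : C2 * (3 * PI) <= 8 * Q).
{ assert (C2 <= / (PI * t)) by (apply cot_le_inv; nra).
  assert (0 <= C2) by (apply cot_nonneg; nra).
  assert (C2 * (PI * t) <= 1).
  { replace 1 with (/ (PI * t) * (PI * t)) by (field; nra).
    apply Rmult_le_compat_r; nra. }
  assert (0 <= C2 * PI * (8 * (Q * t) - 3)) by (apply Rmult_le_pos; nra).
  assert (0 <= 8 * Q * (1 - C2 * (PI * t))) by (apply Rmult_le_pos; lra).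
  nra. }
assert (HA1 : 7 * Q <= A1 * (5 * PI)).
{ set (w := PI * (/ Q - s)) in *.
  assert (Hw : w * (8 * Q) <= 5 * PI).
  { assert (Q * t <= Q * s) by nra.
    replace (w * (8 * Q)) with (8 * PI * (1 - Q * s)) by (unfold w; rewrite <- HQinv; ring).
    nra. }
  assert (0 < w) by (unfold w; nra).
  assert (w <= 1 / 2) by nra.
  assert (Hcot : (1 - w ^ 2 / 2) / w * w <= A1 * w).
  { apply Rmult_le_compat_r; [lra |]. apply cot_ge_inv; lra. }
  replace ((1 - w ^ 2 / 2) / w * w) with (1 - w ^ 2 / 2) in Hcot by (field; lra).
  nra. }
assert (HC2A1 : C2 <= (Q - 2) * A1) by nra.
nra.
Qed.

(* The left side is at most PI^2 t (1 - Q t) by [sin x < x]; on the right, [PI Q t] is within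
   [PI/8] of [PI/2], so its sine is at least 23/25, and [v = PI (1/Q + t) <= 13/10] gives
   [sin v >= 71/100 v]. *)
Lemma sin_product_lt (Q t : R) : 4 <= Q -> 3 / 8 < Q * t < 5 / 8 ->
  Q * sin (PI * t) * sin (PI * (/ Q - t)) < sin (PI * Q * t) * sin (PI * (/ Q + t)).
Proof.
intros HQ Ht.
pose proof PI_RGT_0; pose proof PI_lt_16_5.
set (a := Q * t) in *.
set (h := PI / Q).
assert (Hh : Q * h = PI) by (unfold h; field; lra).
assert (0 < h) by (unfold h; apply Rdiv_lt_0_compat; lra).
assert (h <= 4 / 5) by nra.
replace (PI * t) with (h * a) by (unfold h, a; field; lra).
replace (PI * (/ Q - t)) with (h * (1 - a)) by (unfold h, a; field; lra).
replace (PI * (/ Q + t)) with (h * (1 + a)) by (unfold h, a; field; lra).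
replace (PI * Q * t) with (PI * a) by (unfold a; ring).
assert (Hleft : Q * sin (h * a) * sin (h * (1 - a)) <= PI * h * (a * (1 - a))).
{ pose proof (sin_lt_x (h * a) ltac:(nra)).
  pose proof (sin_lt_x (h * (1 - a)) ltac:(nra)).
  assert (0 < sin (h * a)) by (apply sin_gt_0; nra).
  assert (0 < sin (h * (1 - a))) by (apply sin_gt_0; nra).
  assert (sin (h * a) * sin (h * (1 - a)) <= h * a * (h * (1 - a)))
    by (apply Rmult_le_compat; lra).
  rewrite <- Hh; nra. }
assert (Hmid : 23 / 25 <= sin (PI * a)).
{ rewrite <- cos_shift.
  pose proof (cos_ge_taylor2 (PI / 2 - PI * a) ltac:(split; nra)).
  assert ((PI / 2 - PI * a) ^ 2 <= 4 / 25).
  { replace ((PI / 2 - PI * a) ^ 2) with (PI ^ 2 * (1 / 2 - a) ^ 2) by field.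
    assert ((1 / 2 - a) ^ 2 <= 1 / 64) by nra.
    assert (PI ^ 2 <= 256 / 25) by nra.
    nra. }
  lra. }
set (v := h * (1 + a)).
assert (0 < v) by (unfold v; nra).
assert (Hv : 71 / 100 * v <= sin v).
{ pose proof (sin_ge_taylor3 v ltac:(unfold v; split; nra)).
  assert (v ^ 2 <= 169 / 100).
  { replace (v ^ 2) with (h ^ 2 * (1 + a) ^ 2) by (unfold v; ring).
    assert ((1 + a) ^ 2 <= 169 / 64) by nra.
    assert (h ^ 2 <= 16 / 25) by nra.
    nra. }
  nra. }
assert (Hright : 23 / 25 * (71 / 100) * v <= sin (PI * a) * sin v).
{ apply Rle_trans with (23 / 25 * sin v); [nra |].
  apply Rmult_le_compat_r; nra. }
assert (PI * h * (a * (1 - a)) < 23 / 25 * (71 / 100) * v).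
{ assert (PI * (a * (1 - a)) < 23 / 25 * (71 / 100) * (1 + a)).
  { assert (0 < a * (1 - a)) by nra. nra. }
  unfold v; nra. }
lra.
Qed.

Lemma sin_PI_mul_pos x : 0 < x < 1 -> 0 < sin (PI * x).
Proof. intros Hx; pose proof PI_RGT_0; apply sin_gt_0; nra. Qed.

Lemma sin_PI_mul_INR_pos q x : 0 < x < / INR q -> 0 < sin (PI * INR q * x).
Proof.
intros Hx.
assert (0 < INR q) by (rewrite <- (Rinv_inv (INR q)); apply Rinv_0_lt_compat; lra).
assert (INR q * x < INR q * / INR q) by (apply Rmult_lt_compat_l; lra).
rewrite Rinv_r in * by lra.
rewrite Rmult_assoc; apply sin_PI_mul_pos; nra.
Qed.

Lemma inv_INR_le_1 q : (1 <= q)%nat -> / INR q <= 1.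
Proof.
intros Hq; apply le_INR in Hq; simpl in Hq.
rewrite <- Rinv_1; apply Rinv_le_contravar; lra.
Qed.

Lemma fq_0 q : fq q 0 = ln (INR q).
Proof. unfold fq; rewrite Rmult_0_r, sin_0; destruct (Req_EM_T 0 0); [reflexivity | lra]. Qed.

Lemma fq_on_first_arch q x : (1 <= q)%nat -> 0 < x < / INR q ->
  fq q x = ln (sin (PI * INR q * x)) - ln (sin (PI * x)).
Proof.
intros Hq Hx; pose proof (inv_INR_le_1 q Hq).
assert (Hs : 0 < sin (PI * x)) by (apply sin_PI_mul_pos; lra).
assert (Hsq := sin_PI_mul_INR_pos q x Hx).
unfold fq; destruct (Req_EM_T (sin (PI * x)) 0) as [E | _]; [lra |].
rewrite Rabs_pos_eq by (apply Rlt_le, Rdiv_lt_0_compat; lra).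
apply ln_div; lra.
Qed.

Definition dfq (q : nat) (x : R) : R :=
  PI * INR q * cot (PI * INR q * x) - PI * cot (PI * x).

Lemma is_derive_fq q x : (1 <= q)%nat -> 0 < x < / INR q -> is_derive (fq q) x (dfq q x).
Proof.
intros Hq Hx; pose proof (inv_INR_le_1 q Hq).
apply is_derive_ext_loc with (fun y => ln (sin (PI * INR q * y)) - ln (sin (PI * y))).
- apply (locally_interval _ x 0 (/ INR q)); try easy.
  intros y Hy0 Hy1; symmetry; apply fq_on_first_arch; simpl in *; auto.
- assert (0 < sin (PI * x)) by (apply sin_PI_mul_pos; lra).
  pose proof (sin_PI_mul_INR_pos q x Hx).
  unfold dfq, cot; auto_derive; [repeat split; lra | field; lra].
Qed.

Lemma Derive_fq q x : (1 <= q)%nat -> 0 < x < / INR q -> Derive (fq q) x = dfq q x.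
Proof. intros Hq Hx; apply is_derive_unique, is_derive_fq; assumption. Qed.

Definition inner_point (Q t s : R) : R := / Q - t - (s - t) / (Q - 1).

Lemma inner_point_bounds Q t s : 2 <= Q -> t <= s ->
  / Q - s <= inner_point Q t s <= / Q - t.
Proof.
intros HQ Hts; unfold inner_point.
assert (0 <= (s - t) / (Q - 1)) by (apply Rdiv_le_0_compat; lra).
assert ((s - t) / (Q - 1) * (Q - 1) = s - t) by (field; lra).
split; nra.
Qed.

Definition dGq (q : nat) (t s : R) : R :=
  - PI * (cot (PI * (/ INR q - s)) + cot (PI * (/ INR q + s)))
  - (dfq q (inner_point (INR q) t s) + dfq q t) / (INR q - 1).

Lemma is_derive_Gq q t s : (2 <= q)%nat -> 0 < t -> t <= s < / INR q ->
  is_derive (Gq q t) s (dGq q t s).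
Proof.
intros Hq Ht Hs.
assert (HQ : 2 <= INR q) by (apply le_INR in Hq; simpl in Hq; lra).
assert (/ INR q <= / 2) by (apply Rinv_le_contravar; lra).
pose proof (inner_point_bounds (INR q) t s HQ ltac:(lra)) as Hz.
assert (Hfz : is_derive (fq q) (inner_point (INR q) t s) (dfq q (inner_point (INR q) t s)))
  by (apply is_derive_fq; [lia | lra]).
assert (Hft : Derive (fq q) t = dfq q t) by (apply Derive_fq; [lia | lra]).
assert (0 < sin (PI * (/ INR q - s))) by (apply sin_PI_mul_pos; lra).
assert (0 < sin (PI * (/ INR q + s))) by (apply sin_PI_mul_pos; lra).
unfold Gq, Uq, Vq, dGq; rewrite Hft.
auto_derive.
- repeat split; [lra | apply Rdiv_lt_0_compat; assumption | eexists; exact Hfz].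
- change (fun x => fq q x) with (fq q).
  change (/ INR q - t + - ((s + - t) * / (INR q - 1))) with (inner_point (INR q) t s).
  rewrite (is_derive_unique _ _ _ Hfz).
  change (/ INR q + - s) with (/ INR q - s).
  unfold cot; field; lra.
Qed.

Lemma dGq_nonpos q t s : (4 <= q)%nat -> 3 / 8 < INR q * t < 5 / 8 -> t <= s < / INR q ->
  dGq q t s <= 0.
Proof.
intros Hq Ht Hs.
assert (HQ : 4 <= INR q) by (apply le_INR in Hq; simpl in Hq; lra).
pose proof PI_RGT_0.
pose proof (cot_combination_ge (INR q) t s (inner_point (INR q) t s) HQ Ht Hs
  (inner_point_bounds (INR q) t s ltac:(lra) ltac:(lra))) as Hcot.
unfold dGq, dfq.
set (A := cot (PI * (/ INR q - s)) + cot (PI * (/ INR q + s))) in *.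
set (B1 := cot (PI * INR q * inner_point (INR q) t s)) in *.
set (B2 := cot (PI * inner_point (INR q) t s)) in *.
set (C1 := cot (PI * INR q * t)) in *; set (C2 := cot (PI * t)) in *.
replace (- PI * A - (PI * INR q * B1 - PI * B2 + (PI * INR q * C1 - PI * C2)) / (INR q - 1))
  with (- (PI / (INR q - 1)) * ((INR q - 1) * A + INR q * (B1 + C1) - (B2 + C2)))
  by (field; lra).
assert (0 < PI / (INR q - 1)) by (apply Rdiv_lt_0_compat; lra).
nra.
Qed.

Lemma Gq_diag q t : Gq q t t = Uq q t + fq q 0 - fq q t.
Proof.
unfold Gq, Vq.
replace ((t - t) / (INR q - 1)) with 0 by (unfold Rdiv; ring).
rewrite Rminus_0_r; ring.
Qed.

Lemma Gq_diag_neg q t : (4 <= q)%nat -> 3 / 8 < INR q * t < 5 / 8 -> Gq q t t < 0.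
Proof.
intros Hq Ht.
assert (HQ : 4 <= INR q) by (apply le_INR in Hq; simpl in Hq; lra).
assert (/ INR q <= / 4) by (apply Rinv_le_contravar; lra).
assert (INR q * / INR q = 1) by (field; lra).
assert (Ht' : 0 < t < / INR q) by nra.
assert (0 < sin (PI * t)) by (apply sin_PI_mul_pos; lra).
assert (0 < sin (PI * INR q * t)) by (apply sin_PI_mul_INR_pos; lra).
assert (0 < sin (PI * (/ INR q - t))) by (apply sin_PI_mul_pos; lra).
assert (0 < sin (PI * (/ INR q + t))) by (apply sin_PI_mul_pos; lra).
rewrite Gq_diag, fq_0, fq_on_first_arch by (lia || lra).
unfold Uq; rewrite ln_div by lra.
assert (Hpos : 0 < INR q * sin (PI * t) * sin (PI * (/ INR q - t)))
  by (apply Rmult_lt_0_compat; [apply Rmult_lt_0_compat |]; lra).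
pose proof (ln_increasing _ _ Hpos (sin_product_lt (INR q) t HQ Ht)) as Hln.
rewrite !ln_mult in Hln by (try apply Rmult_lt_0_compat; lra).
lra.
Qed.


Theorem lemma5p10 (q : nat) (t s : R) :
  (4 <= q)%nat ->
  3 / (8 * INR q) < t < 5 / (8 * INR q) ->
  t <= s < / INR q ->
  Gq q t s < 0.
Proof.
intros Hq Ht Hs.
assert (HQ : 4 <= INR q) by (apply le_INR in Hq; simpl in Hq; lra).
assert (Hqt : 3 / 8 < INR q * t < 5 / 8).
{ replace (3 / 8) with (INR q * (3 / (8 * INR q))) by (field; lra).
  replace (5 / 8) with (INR q * (5 / (8 * INR q))) by (field; lra).
  split; apply Rmult_lt_compat_l; lra. }
assert (Ht0 : 0 < t) by nra.
apply Rle_lt_trans with (Gq q t t); [| exact (Gq_diag_neg q t Hq Hqt)].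
apply (derive_nonpos_le (Gq q t) (dGq q t) t s); [lra | |]; intros x Hx.
- apply is_derive_Gq; [lia | lra | lra].
- apply dGq_nonpos; [exact Hq | exact Hqt | lra].
Qed.
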